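(* Consider the one-stage ANC game described in the context with scalar control ($m=1$). Suppose that for every $x\in\mathbb{R}^n$ and $a\in\mathcal{A}$ the functions $u\mapsto\Sigma(F(x,u),u,a)$ and $u\mapsto\Sigma(F(x,0),u,a)$ are convex on $\mathbb{R}$ and continuously differentiable on $\mathbb{R}$ except possibly at finitely many points; let $U^d=U^d(x)$ be the set of such exceptional points. Let $\mathcal{G}=\{a_1,a_2\}\subset\mathcal{A}$ with $a_1\ne a_2$. (i) If for every $x,s$ there exists $\bar u\notin U^d$ such that $h^{x,s}_{a_1}(\bar u)=h^{x,s}_{a_2}(\bar u)$ and $h^{x,s}_i(\bar u)\ge h^{x,s}_a(\bar u)$ for all $i\in\mathcal{G}$, $a\notin\mathcal{G}$, and either $\frac{dh^{x,s}_{a_1}(\bar u)}{du}\cdot\frac{dh^{x,s}_{a_2}(\bar u)}{du}<0$ or $\frac{dh^{x,s}_{a_1}(\bar u)}{du}=\frac{dh^{x,s}_{a_2}(\bar u)}{du}=0$, then the game admits a non-pure saddle point $(u^*,p^* )$, $u^*\notin U^d$, with $p^*$ supported on $\mathcal{G}$. (ii) Conversely, if the game admits a non-pure saddle point $(u^*,p^* )$, $u^*\notin U^d$, with $p^*$ supported on $\mathcal{G}$, then there exists $\bar u\notin U^d$ such that $h^{x,s}_{a_1}(\bar u)=h^{x,s}_{a_2}(\bar u)$ and either $\frac{dh^{x,s}_{a_1}(\bar u)}{du}\cdot\frac{dh^{x,s}_{a_2}(\bar u)}{du}<0$ or $\frac{dh^{x,s}_{a_1}(\bar u)}{du}=\frac{dh^{x,s}_{a_2}(\bar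 u)}{du}=0$.
   Context: Setting (one-stage ANC game). Let $\mathcal{F}=\{1,\dots,|\mathcal{F}|\}$ be a finite set of transmission regimes and $\mathcal{A}=\{1,\dots,N\}$ a finite set of jammer actions. For each $a\in\mathcal{A}$ let $P(a)$ be an $|\mathcal{F}|\times|\mathcal{F}|$ row-stochastic matrix, and let $q\in[0,1]^{|\mathcal{F}|}$. Let $F:\mathbb{R}^n\times\mathbb{R}^m\to\mathbb{R}^n$, $\sigma^0:\mathbb{R}^n\times\mathbb{R}^m\to\mathbb{R}$, $\sigma^1:\mathbb{R}^n\to\mathbb{R}$, $g^0:\mathcal{A}\times\mathcal{F}\to\mathbb{R}$. For a plant state $x$ and regime $s$, the controller chooses $u\in\mathbb{R}^m$, the jammer chooses $p\in\mathcal{S}_{N-1}$ (unit simplex in $\mathbb{R}^N$); $a$ is drawn according to $p$, $s^+$ with $\mathrm{Pr}(s^+=i)=P_{si}(a)$, $b\in\{0,1\}$ with $\mathrm{Pr}(b=1\mid s^+)=q_{s^+}$, and $x^+=F(x,bu)$. Payoff $\Sigma(x^+,u,a)=\sigma^0(x,u)+\sigma^1(x^+)-g^0(a,s)$, with expectation $p'h^{x,s}(u)$ where $h^{x,s}_i(u)=(P(i)q)_s\Sigma(F(x,u),u,i)+(1-(P(i)q)_s)\Sigma(F(x,0),u,i)$, $(P(i)q)_s$ being the $s$-th entry of $P(i)q$. A saddle point is $(u^*,p^* )\in\mathbb{R}^m\times\mathcal{S}_{N-1}$ with $p'h^{x,s}(u^* )\le(p^* )'h^{x,s}(u^* )\le(p^*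 )'h^{x,s}(u)$ for all $u,p$. It is non-pure if $p^*$ has at least two positive components; ''$p^*$ supported on $\mathcal{G}$'' means $p^*_a=0$ for $a\notin\mathcal{G}$. *)

From HB Require Import structures.
From mathcomp Require Import all_boot all_order all_algebra.
From mathcomp Require Import all_classical all_reals all_analysis.
Set Implicit Arguments. Unset Strict Implicit. Unset Printing Implicit Defensive.
Import Order.TTheory GRing.Theory Num.Theory.
Import numFieldNormedType.Exports.
Local Open Scope classical_set_scope.
Local Open Scope ring_scope.

Section ANC.
Variables (R : realType) (n nF N : nat).
Variable F : 'rV[R]_n -> R -> 'rV[R]_n.
Variable sigma0 : 'rV[R]_n -> R -> R.
Variable sigma1 : 'rV[R]_n -> R.
(* g0 : A x F -> R ; actions 'I_N, regimes 'I_nF *)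
Variable g0 : 'I_N -> 'I_nF -> R.
Variable P : 'I_N -> 'M[R]_nF.
Variable q : 'cV[R]_nF.

Definition Sigma (x : 'rV[R]_n) (s : 'I_nF) (xp : 'rV[R]_n) (u : R) (a : 'I_N) : R :=
  sigma0 x u + sigma1 xp - g0 a s.

Definition Pq (s : 'I_nF) (i : 'I_N) : R := (P i *m q) s ord0.

Definition h (x : 'rV[R]_n) (s : 'I_nF) (i : 'I_N) (u : R) : R :=
  Pq s i * Sigma x s (F x u) u i + (1 - Pq s i) * Sigma x s (F x 0) u i.

Definition payoff (x : 'rV[R]_n) (s : 'I_nF) (p : 'I_N -> R) (u : R) : R :=
  \sum_(i < N) p i * h x s i u.

Definition in_simplex (p : 'I_N -> R) : Prop :=
  (forall i, 0 <= p i) /\ \sum_(i < N) p i = 1.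

Definition saddle_point (x : 'rV[R]_n) (s : 'I_nF) (u : R) (p : 'I_N -> R) : Prop :=
  in_simplex p /\
  (forall p', in_simplex p' -> payoff x s p' u <= payoff x s p u) /\
  (forall u', payoff x s p u <= payoff x s p u').

Definition non_pure (p : 'I_N -> R) : Prop :=
  exists i j : 'I_N, i != j /\ 0 < p i /\ 0 < p j.

Definition supported_on2 (p : 'I_N -> R) (a1 a2 : 'I_N) : Prop :=
  forall a, a != a1 -> a != a2 -> p a = 0.

Definition C1_at (f : R -> R) (u : R) : Prop :=
  (\forall v \near u, derivable f v 1) /\ {for u, continuous (derive1 f)}.

Definition Ud (x : 'rV[R]_n) : set R :=
  [set u | exists (s : 'I_nF) (a : 'I_N),
     ~ C1_at (fun v => Sigma x s (F x v) v a) u \/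
     ~ C1_at (fun v => Sigma x s (F x 0) v a) u].

End ANC.

Definition convex_on_R (R : realType) (f : R -> R) : Prop :=
  forall (y z t : R), 0 <= t -> t <= 1 ->
    f (t * y + (1 - t) * z) <= t * f y + (1 - t) * f z.

(* Against the mixed strategy p = p1 e_a1 + p2 e_a2 the controller faces the
   convex function u |-> p1 h_a1(u) + p2 h_a2(u).  Off U^d it is differentiable,
   and for a convex differentiable function "global minimiser" and "critical
   point" coincide.  So (u, p) is a saddle point iff the jammer is indifferent
   between a1 and a2 at u (h_a1(u) = h_a2(u), dominating the other actions)
   and p1 h_a1'(u) + p2 h_a2'(u) = 0.  With p1, p2 > 0 the latter says exactly
   that h_a1'(u) and h_a2'(u) have strictly opposite signs or both vanish. *)

From HB Require Import structures.
From mathcomp Require Import all_boot all_order all_algebra.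
From mathcomp Require Import all_classical all_reals all_analysis.
From mathcomp Require Import ring lra.
Set Implicit Arguments. Unset Strict Implicit. Unset Printing Implicit Defensive.
Import Order.TTheory GRing.Theory Num.Theory.
Import numFieldNormedType.Exports.
Local Open Scope classical_set_scope.
Local Open Scope ring_scope.

Section RealFunctions.
Variable R : realType.
Implicit Types (g : R -> R) (c v : R).

Lemma derive_at_right g c v : derivable g c v ->
  t^-1 * (g (t * v + c) - g c) @[t --> 0^'+] --> 'D_v g c.
Proof. by move=> dg; apply: cvg_dnbhs_at_right; exact: dg. Qed.

Lemma derive_dir g v c : derivable g c 1 ->
  derivable g c v /\ 'D_v g c = v * 'D_1 g c.
Proof.
move=> /derivable1_diffP dg; split; first exact: diff_derivable.
by rewrite !deriveE // -{1}[v]mulr1 linearZ.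
Qed.

Lemma convex_tangent_le g c y : convex_on_R g -> derivable g c 1 ->
  g c + (y - c) * 'D_1 g c <= g y.
Proof.
move=> cg dg; have [dgv <-] := derive_dir (y - c) dg.
have Dg := derive_at_right dgv.
rewrite addrC -lerBrDr -(cvg_lim _ Dg) //; apply: limr_le; first exact: cvgP Dg.
(* for 0 < t <= 1, convexity on [c, y] bounds the difference quotient by g y - g c *)
near=> t.
have t0 : 0 < t by near: t; exists 1 => //= ? _.
have t1 : t <= 1.
  near: t; exists 1 => //= t; rewrite /ball_ /= distrC subr0.
  by move=> /(le_lt_trans (ler_norm t)) /ltW.
rewrite ler_pdivrMl // -lerBrDr.
have -> : t * (y - c) + c = t * y + (1 - t) * c by ring.
by have := cg y c t (ltW t0) t1; lra.
Unshelve. all: by end_near.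
Qed.

Lemma derive1_at_global_min g c : derivable g c 1 -> (forall y, g c <= g y) ->
  'D_1 g c = 0.
Proof.
move=> dg gmin.
have D_ge0 v : 0 <= 'D_v g c.
  have [dgv _] := derive_dir v dg; have Dg := derive_at_right dgv.
  rewrite -(cvg_lim _ Dg) //; apply: limr_ge; first exact: cvgP Dg.
  near=> t; have t0 : 0 < t by near: t; exists 1 => //= ? _.
  by rewrite pmulr_rge0 ?invr_gt0 // subr_ge0.
have := D_ge0 (-1); rewrite (derive_dir (-1) dg).2 mulN1r oppr_ge0 => D_le0.
by apply/eqP; rewrite eq_le D_le0 D_ge0.
Unshelve. all: by end_near.
Qed.

Lemma convex_on_R_comb g1 g2 a b : 0 <= a -> 0 <= b ->
  convex_on_R g1 -> convex_on_R g2 -> convex_on_R (fun u => a * g1 u + b * g2 u).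
Proof.
move=> a0 b0 cg1 cg2 y z t t0 t1.
have := ler_wpM2l a0 (cg1 y z t t0 t1); have := ler_wpM2l b0 (cg2 y z t t0 t1).
lra.
Qed.

Lemma is_derive_comb g1 g2 a b u : derivable g1 u 1 -> derivable g2 u 1 ->
  is_derive u 1 (fun v => a * g1 v + b * g2 v) (a * 'D_1 g1 u + b * 'D_1 g2 u).
Proof.
move=> /derivableP d1 /derivableP d2.
have -> : (fun v => a * g1 v + b * g2 v) = a *: g1 + b *: g2 by [].
exact: is_deriveD.
Qed.

End RealFunctions.

Section StrictCombination.
Variable R : realFieldType.

Definition zero_strict_comb (d1 d2 : R) :=
  exists p1 p2, [/\ 0 < p1, 0 < p2, p1 + p2 = 1 & p1 * d1 + p2 * d2 = 0].

Lemma zero_strict_combP d1 d2 :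
  zero_strict_comb d1 d2 <-> d1 * d2 < 0 \/ (d1 = 0 /\ d2 = 0).
Proof.
split=> [[p1 [p2 [p10 p20 _]]]|[d12|[-> ->]]].
- case: (eqVneq d1 0) => [->|d1n0] comb0.
    right; split=> //; apply/eqP; move/eqP: comb0.
    by rewrite mulr0 add0r mulf_eq0 gt_eqF.
  left; have : 0 < d1 ^+ 2 by rewrite exprn_even_gt0.
  nra.
- have d21 : d2 - d1 != 0.
    by rewrite subr_eq0; apply: contraTneq d12 => ->; rewrite -leNgt -expr2 sqr_ge0.
  have sq_gt0 : 0 < (d2 - d1) ^+ 2 by rewrite exprn_even_gt0.
  (* p1 = d2 / (d2 - d1), p2 = - d1 / (d2 - d1), written over (d2 - d1)^2 so
     that their positivity needs no case split on the signs *)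
  exists (d2 * (d2 - d1) / (d2 - d1) ^+ 2), (d1 * (d1 - d2) / (d2 - d1) ^+ 2).
  by split; [apply: divr_gt0 => //; nra | apply: divr_gt0 => //; nra | field | field].
- by exists (1/2), (1/2); split; rewrite ?mulr0 ?addr0 //; lra.
Qed.

End StrictCombination.

Lemma big_ord_supp2 (V : nmodType) N (a1 a2 : 'I_N) (w : 'I_N -> V) : a1 != a2 ->
  (forall a, a != a1 -> a != a2 -> w a = 0) -> \sum_(i < N) w i = w a1 + w a2.
Proof.
move=> a12 w0; rewrite (bigD1 a1) //= (bigD1 a2) 1?eq_sym //= big1 ?addr0 ?addrA //.
by move=> i /andP [ia1 ia2]; rewrite w0.
Qed.

Lemma Pq_itv (R : realType) nF N (P : 'I_N -> 'M[R]_nF) (q : 'cV[R]_nF) s i :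
  (forall a i j, 0 <= P a i j) -> (forall a i, \sum_(j < nF) P a i j = 1) ->
  (forall i, 0 <= q i ord0 <= 1) -> 0 <= Pq P q s i <= 1.
Proof.
move=> P_ge0 P_row q01; rewrite /Pq mxE; apply/andP; split.
  by apply: sumr_ge0 => j _; apply: mulr_ge0 => //; case/andP: (q01 j).
rewrite -(P_row i s); apply: ler_sum => j _.
by case/andP: (q01 j) => q0 q1; apply: ler_piMr.
Qed.

Section TwoActionGame.
Variables (R : realType) (n nF N : nat).
Variables (F : 'rV[R]_n -> R -> 'rV[R]_n) (sigma0 : 'rV[R]_n -> R -> R).
Variables (sigma1 : 'rV[R]_n -> R) (g0 : 'I_N -> 'I_nF -> R).
Variables (P : 'I_N -> 'M[R]_nF) (q : 'cV[R]_nF).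
Hypothesis P_ge0 : forall a i j, 0 <= P a i j.
Hypothesis P_row : forall a i, \sum_(j < nF) P a i j = 1.
Hypothesis q01 : forall i, 0 <= q i ord0 <= 1.
Hypothesis Sigma1_convex : forall x s a,
  convex_on_R (fun u => Sigma sigma0 sigma1 g0 x s (F x u) u a).
Hypothesis Sigma0_convex : forall x s a,
  convex_on_R (fun u => Sigma sigma0 sigma1 g0 x s (F x 0) u a).
Variables (a1 a2 : 'I_N).
Hypothesis a12 : a1 != a2.

Local Notation h := (h F sigma0 sigma1 g0 P q).
Local Notation payoff := (payoff F sigma0 sigma1 g0 P q).
Local Notation saddle_point := (saddle_point F sigma0 sigma1 g0 P q).
Local Notation Ud := (Ud F sigma0 sigma1 g0).

Lemma h_convex x s a : convex_on_R (h x s a).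
Proof.
have /andP [Pq0 Pq1] := Pq_itv s a P_ge0 P_row q01.
by apply: convex_on_R_comb; rewrite ?subr_ge0.
Qed.

Lemma h_derivable x s a u : ~ Ud x u -> derivable (h x s a) u 1.
Proof.
move=> uNUd; have C1_derivable f : C1_at f u -> derivable f u 1.
  by move=> [/nbhs_singleton].
apply: ex_derive; apply: is_derive_comb; apply: C1_derivable.
  by apply: contrapT => NC1; apply: uNUd; exists s, a; left.
by apply: contrapT => NC1; apply: uNUd; exists s, a; right.
Qed.

Lemma payoff_le x s p u M : in_simplex p -> (forall i, h x s i u <= M) ->
  payoff x s p u <= M.
Proof.
move=> [p_ge0 p_sum] hM; rewrite -[M]mul1r -p_sum mulr_suml.
by apply: ler_sum => i _; apply: ler_wpM2l.
Qed.

Lemma payoff_supp2 x s p u : supported_on2 p a1 a2 ->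
  payoff x s p u = p a1 * h x s a1 u + p a2 * h x s a2 u.
Proof.
by move=> p0; rewrite /payoff (big_ord_supp2 a12) // => a /p0 /[apply] ->; rewrite mul0r.
Qed.

Definition mix2 (p1 p2 : R) : 'I_N -> R :=
  fun a => if a == a1 then p1 else if a == a2 then p2 else 0.

Lemma mix2_a1 p1 p2 : mix2 p1 p2 a1 = p1.
Proof. by rewrite /mix2 eqxx. Qed.

Lemma mix2_a2 p1 p2 : mix2 p1 p2 a2 = p2.
Proof. by rewrite /mix2 eq_sym (negbTE a12) eqxx. Qed.

Lemma supported_on2_mix2 p1 p2 : supported_on2 (mix2 p1 p2) a1 a2.
Proof. by move=> a /negbTE aa1 /negbTE aa2; rewrite /mix2 aa1 aa2. Qed.

Lemma in_simplex_mix2 p1 p2 : 0 <= p1 -> 0 <= p2 -> p1 + p2 = 1 ->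
  in_simplex (mix2 p1 p2).
Proof.
move=> p10 p20 p12; split; first by move=> a; rewrite /mix2; do 2?case: ifP.
by rewrite (big_ord_supp2 a12 (@supported_on2_mix2 p1 p2)) mix2_a1 mix2_a2.
Qed.

Lemma payoff_mix2 x s p1 p2 u :
  payoff x s (mix2 p1 p2) u = p1 * h x s a1 u + p2 * h x s a2 u.
Proof. by rewrite payoff_supp2 ?mix2_a1 ?mix2_a2 //; exact: supported_on2_mix2. Qed.

Lemma non_pure_supp2 (p : 'I_N -> R) : non_pure p -> supported_on2 p a1 a2 ->
  0 < p a1 /\ 0 < p a2.
Proof.
move=> [i [j [ij [pi pj]]]] p0.
have supp k : 0 < p k -> k = a1 \/ k = a2.
  move=> pk; case: (eqVneq k a1) => [|ka1]; first by left.
  by case: (eqVneq k a2) => [|ka2]; [right | rewrite p0 ?ltxx in pk].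
have [Ei|Ei] := supp i pi; have [Ej|Ej] := supp j pj; subst i j;
  by rewrite ?eqxx in ij.
Qed.

Lemma saddle_of_equalizer x s ub : ~ Ud x ub ->
  h x s a1 ub = h x s a2 ub ->
  (forall a, a != a1 -> a != a2 -> h x s a ub <= h x s a1 ub) ->
  zero_strict_comb ('D_1 (h x s a1) ub) ('D_1 (h x s a2) ub) ->
  exists p, [/\ saddle_point x s ub p, non_pure p & supported_on2 p a1 a2].
Proof.
move=> ubNUd h12 h_dom [p1 [p2 [p10 p20 p12 D0]]].
exists (mix2 p1 p2); split; last exact: supported_on2_mix2.
- split; first by apply: in_simplex_mix2; rewrite ?ltW.
  split=> [p' p'_simplex | u].
    rewrite payoff_mix2 -h12 -mulrDl p12 mul1r; apply: payoff_le => // a.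
    have [->|aa1] := eqVneq a a1; first by [].
    by have [->|aa2] := eqVneq a a2; [rewrite h12 | exact: h_dom].
  have dh a : derivable (h x s a) ub 1 := h_derivable ubNUd.
  have [dcomb Dcomb] := is_derive_comb p1 p2 (dh a1) (dh a2).
  rewrite !payoff_mix2; have := convex_tangent_le u
    (convex_on_R_comb (ltW p10) (ltW p20) (h_convex x s a1) (h_convex x s a2)) dcomb.
  by rewrite Dcomb D0 mulr0 addr0.
- by exists a1, a2; rewrite mix2_a1 mix2_a2.
Qed.

Lemma equalizer_of_saddle x s us p :
  saddle_point x s us p -> non_pure p -> ~ Ud x us -> supported_on2 p a1 a2 ->
  h x s a1 us = h x s a2 us /\
  zero_strict_comb ('D_1 (h x s a1) us) ('D_1 (h x s a2) us).
Proof.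
move=> [[_ p_sum] [p_max p_min]] p_non_pure usNUd p0.
have [pa1 pa2] := non_pure_supp2 p_non_pure p0.
have p12 : p a1 + p a2 = 1 by rewrite -p_sum (big_ord_supp2 a12).
have pay u : payoff x s p u = p a1 * h x s a1 u + p a2 * h x s a2 u.
  exact: payoff_supp2.
have pure_le p1 p2 : 0 <= p1 -> 0 <= p2 -> p1 + p2 = 1 ->
    p1 * h x s a1 us + p2 * h x s a2 us <= p a1 * h x s a1 us + p a2 * h x s a2 us.
  by move=> *; rewrite -pay -payoff_mix2; apply/p_max/in_simplex_mix2.
have h12 : h x s a1 us = h x s a2 us.
  by have := pure_le 1 0; have := pure_le 0 1; rewrite !ler01 lexx; nra.
split=> //; exists (p a1), (p a2); split=> //.
have dh a : derivable (h x s a) us 1 := h_derivable usNUd.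
have [dcomb <-] := is_derive_comb (p a1) (p a2) (dh a1) (dh a2).
apply: derive1_at_global_min dcomb _.
by move=> y; rewrite -!pay; exact: p_min.
Qed.

End TwoActionGame.

Theorem theorem3 (R : realType) (n nF N : nat)
  (F : 'rV[R]_n -> R -> 'rV[R]_n) (sigma0 : 'rV[R]_n -> R -> R)
  (sigma1 : 'rV[R]_n -> R) (g0 : 'I_N -> 'I_nF -> R)
  (P : 'I_N -> 'M[R]_nF) (q : 'cV[R]_nF)
  (HPnn : forall a i j, 0 <= P a i j)
  (HProw : forall a i, \sum_(j < nF) P a i j = 1)
  (Hq : forall i, 0 <= q i ord0 <= 1)
  (Hconv1 : forall x s a,
     convex_on_R (fun u => Sigma sigma0 sigma1 g0 x s (F x u) u a))
  (Hconv0 : forall x s a,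
     convex_on_R (fun u => Sigma sigma0 sigma1 g0 x s (F x 0) u a))
  (Hfin : forall x, finite_set (Ud F sigma0 sigma1 g0 x))
  (a1 a2 : 'I_N) (Ha12 : a1 != a2) :
  let hh := h F sigma0 sigma1 g0 P q in
  let U := Ud F sigma0 sigma1 g0 in
  ((forall x s, exists ub : R,
       ~ U x ub /\
       hh x s a1 ub = hh x s a2 ub /\
       (forall a, a != a1 -> a != a2 ->
          hh x s a ub <= hh x s a1 ub /\ hh x s a ub <= hh x s a2 ub) /\
       (derive1 (hh x s a1) ub * derive1 (hh x s a2) ub < 0 \/
        (derive1 (hh x s a1) ub = 0 /\ derive1 (hh x s a2) ub = 0))) ->
   forall x s, exists (us : R) (p : 'I_N -> R),
       saddle_point F sigma0 sigma1 g0 P q x s us p /\ non_pure p /\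
       ~ U x us /\ supported_on2 p a1 a2)
  /\
  (forall x s, (exists (us : R) (p : 'I_N -> R),
       saddle_point F sigma0 sigma1 g0 P q x s us p /\ non_pure p /\
       ~ U x us /\ supported_on2 p a1 a2) ->
   exists ub : R,
       ~ U x ub /\
       hh x s a1 ub = hh x s a2 ub /\
       (derive1 (hh x s a1) ub * derive1 (hh x s a2) ub < 0 \/
        (derive1 (hh x s a1) ub = 0 /\ derive1 (hh x s a2) ub = 0))).
Proof.
move=> hh U; split.
  move=> equalizer x s.
  have [ub [ubNU [h12 [h_dom D]]]] := equalizer x s.
  rewrite !derive1E in D; move/zero_strict_combP in D.
  have h_dom1 a aa1 aa2 := (h_dom a aa1 aa2).1.
  have [p [saddle p_non_pure p_supp]] :=
    saddle_of_equalizer HPnn HProw Hq Hconv1 Hconv0 Ha12 ubNU h12 h_dom1 D.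
  by exists ub, p.
move=> x s [us [p [saddle [p_non_pure [usNU p_supp]]]]].
have [h12 D] := equalizer_of_saddle Ha12 saddle p_non_pure usNU p_supp.
by exists us; rewrite !derive1E; split=> //; split=> //; exact/zero_strict_combP.
Qed.
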